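(* Let $\sigma$ be an environment and $e$ an expression of iTML with $\sigma, e \Rightarrow v$. Let $\mathsf{fwd}_{\sigma,e} : \mathrm{Prefix}(\sigma,e) \to \mathrm{Prefix}(v)$ be the function sending $(\rho,e')$ to the unique $u$ with $\rho, e' \nearrow u$. Then $\mathsf{fwd}_{\sigma,e}$ preserves binary meets: for all $x, x' \in \mathrm{Prefix}(\sigma,e)$, $\mathsf{fwd}_{\sigma,e}(x \sqcap x') = \mathsf{fwd}_{\sigma,e}(x) \sqcap \mathsf{fwd}_{\sigma,e}(x')$.
   Context: Partial syntax ($\Box$ denotes a hole): expressions $e ::= x \mid () \mid \mathsf{inl}\,e \mid \mathsf{inr}\,e \mid (e_1,e_2) \mid \mathsf{fst}\,e \mid \mathsf{snd}\,e \mid \mathsf{fun}\,f(x).M \mid \Box$, where $M$ ranges over (partial) computations of the language (their structure is irrelevant here beyond the order below); values $v ::= () \mid \mathsf{inl}\,v \mid \mathsf{inr}\,v \mid (v_1,v_2) \mid \langle \rho, \mathsf{fun}\,f(x).M\rangle \mid \ell \mid \Box$; environments are finitely supported maps from variables to values, regarded as total with value $\Box$ outside their domain. $\sqsubseteq$ is the least order with $\Box \sqsubseteq t$ that is closed under all constructors componentwise (also for computations), pointwise on environments; on pairs $(\rho,e)$ it is componentwise. $\mathrm{Prefix}(t)=\{t'\mid t'\sqsubseteq t\}$; these are lattices, $\sqcap$ the meet. Evaluation $\rho,e\Rightarrow v$ (on hole-free terms): $\rho,x\Rightarrow\rho(x)$ for $x\in\mathrm{dom}(\rho)$; $\rho,()\Rightarrow()$;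 $\rho,\mathsf{fun}\,f(x).M\Rightarrow\langle\rho,\mathsf{fun}\,f(x).M\rangle$; $\mathsf{inl}$, $\mathsf{inr}$ and pairs evaluate componentwise; if $\rho,e\Rightarrow(v_1,v_2)$ then $\rho,\mathsf{fst}\,e\Rightarrow v_1$ and $\rho,\mathsf{snd}\,e\Rightarrow v_2$. Forward slicing $\rho,e\nearrow v$ (on partial terms): $\rho,\Box\nearrow\Box$; $\rho,x\nearrow\rho(x)$ for $x \in \mathrm{dom}(\rho)$; $\rho,()\nearrow()$; $\rho,\mathsf{fun}\,f(x).M\nearrow\langle\rho,\mathsf{fun}\,f(x).M\rangle$; if $\rho,e\nearrow v$ then $\rho,\mathsf{inl}\,e\nearrow\mathsf{inl}\,v$ and $\rho,\mathsf{inr}\,e\nearrow\mathsf{inr}\,v$; if $\rho,e_i\nearrow v_i$ then $\rho,(e_1,e_2)\nearrow(v_1,v_2)$; if $\rho,e\nearrow(v_1,v_2)$ then $\rho,\mathsf{fst}\,e\nearrow v_1$ and $\rho,\mathsf{snd}\,e\nearrow v_2$; if $\rho,e\nearrow\Box$ then $\rho,\mathsf{fst}\,e\nearrow\Box$ and $\rho,\mathsf{snd}\,e\nearrow\Box$. For $\sigma,e\Rightarrow v$, every element of $\mathrm{Prefix}(\sigma,e)$ has a unique $\nearrow$-image, lying in $\mathrm{Prefix}(v)$. *)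

From Stdlib Require Import List Arith Bool.
Set Implicit Arguments.
Open Scope bool_scope.

Definition var := nat.
Definition loc := nat.

(* Computations: their structure is irrelevant here beyond their prefix
   order; we abstract them as a type with a hole, a partial order in which
   the hole is least, a meet which is the glb of any two elements having a
   common upper bound (i.e. the meet in each Prefix(t)), and a predicate
   "hole-free". *)
Record CompOrder := {
  comp :> Type;
  chole : comp;
  cle : comp -> comp -> Prop;
  cmeet : comp -> comp -> comp;
  cfull : comp -> Prop;
  cle_refl : forall m, cle m m;
  cle_trans : forall a b c, cle a b -> cle b c -> cle a c;
  cle_antisym : forall a b, cle a b -> cle b a -> a = b;
  cle_hole : forall m, cle chole m;
  cmeet_glb : forall t a b, cle a t -> cle b t ->
     cle (cmeet a b) a /\ cle (cmeet a b) b /\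
     (forall c, cle c a -> cle c b -> cle c (cmeet a b))
}.

Section Syntax.
Variable C : CompOrder.

Inductive exp : Type :=
| EVar : var -> exp
| EUnit : exp
| EInl : exp -> exp
| EInr : exp -> exp
| EPair : exp -> exp -> exp
| EFst : exp -> exp
| ESnd : exp -> exp
| EFun : var -> var -> C -> exp
| EHole : exp.

(* values; a closure <rho, fun f(x).M> is VClos rho f x M, where the
   environment rho is a total map with value VHole outside its domain *)
Inductive val : Type :=
| VUnit : val
| VInl : val -> val
| VInr : val -> val
| VPair : val -> val -> val
| VClos : (var -> val) -> var -> var -> C -> val
| VLoc : loc -> val
| VHole : val.

Definition env := var -> val.

Definition env_fin (r : env) : Prop :=
  exists l : list var, forall y, ~ In y l -> r y = VHole.

Inductive wf_val : val -> Prop :=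
| wf_unit : wf_val VUnit
| wf_inl v : wf_val v -> wf_val (VInl v)
| wf_inr v : wf_val v -> wf_val (VInr v)
| wf_pair v w : wf_val v -> wf_val w -> wf_val (VPair v w)
| wf_clos r f x M : env_fin r -> (forall y, wf_val (r y)) ->
    wf_val (VClos r f x M)
| wf_loc l : wf_val (VLoc l)
| wf_hole : wf_val VHole.

Definition wf_env (r : env) : Prop := env_fin r /\ forall y, wf_val (r y).

(* hole-free terms; an environment is hole-free if it has no hole on its
   domain (outside its domain it is VHole by convention) *)
Inductive hf_val : val -> Prop :=
| hf_unit : hf_val VUnit
| hf_inl v : hf_val v -> hf_val (VInl v)
| hf_inr v : hf_val v -> hf_val (VInr v)
| hf_pair v w : hf_val v -> hf_val w -> hf_val (VPair v w)
| hf_clos r f x M : (forall y, r y = VHole \/ hf_val (r y)) -> cfull C M ->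
    hf_val (VClos r f x M)
| hf_loc l : hf_val (VLoc l).

Definition hf_env (r : env) : Prop := forall y, r y = VHole \/ hf_val (r y).

Inductive hf_exp : exp -> Prop :=
| hfe_var y : hf_exp (EVar y)
| hfe_unit : hf_exp EUnit
| hfe_inl e : hf_exp e -> hf_exp (EInl e)
| hfe_inr e : hf_exp e -> hf_exp (EInr e)
| hfe_pair e1 e2 : hf_exp e1 -> hf_exp e2 -> hf_exp (EPair e1 e2)
| hfe_fst e : hf_exp e -> hf_exp (EFst e)
| hfe_snd e : hf_exp e -> hf_exp (ESnd e)
| hfe_fun f x M : cfull C M -> hf_exp (EFun f x M).

Inductive ele : exp -> exp -> Prop :=
| ele_hole e : ele EHole e
| ele_var y : ele (EVar y) (EVar y)
| ele_unit : ele EUnit EUnit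
| ele_inl e e' : ele e e' -> ele (EInl e) (EInl e')
| ele_inr e e' : ele e e' -> ele (EInr e) (EInr e')
| ele_pair e1 e2 e1' e2' : ele e1 e1' -> ele e2 e2' ->
    ele (EPair e1 e2) (EPair e1' e2')
| ele_fst e e' : ele e e' -> ele (EFst e) (EFst e')
| ele_snd e e' : ele e e' -> ele (ESnd e) (ESnd e')
| ele_fun f x M M' : cle C M M' -> ele (EFun f x M) (EFun f x M').

Inductive vle : val -> val -> Prop :=
| vle_hole v : vle VHole v
| vle_unit : vle VUnit VUnit
| vle_inl v v' : vle v v' -> vle (VInl v) (VInl v')
| vle_inr v v' : vle v v' -> vle (VInr v) (VInr v')
| vle_pair v1 v2 v1' v2' : vle v1 v1' -> vle v2 v2' ->
    vle (VPair v1 v2) (VPair v1' v2')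
| vle_clos r r' f x M M' : (forall y, vle (r y) (r' y)) -> cle C M M' ->
    vle (VClos r f x M) (VClos r' f x M')
| vle_loc l : vle (VLoc l) (VLoc l).

Definition envle (r r' : env) : Prop := forall y, vle (r y) (r' y).

(* meets (the meet of two prefixes of a common term) *)
Fixpoint emeet (e e' : exp) : exp :=
  match e, e' with
  | EVar y, EVar y' => if Nat.eqb y y' then EVar y else EHole
  | EUnit, EUnit => EUnit
  | EInl a, EInl a' => EInl (emeet a a')
  | EInr a, EInr a' => EInr (emeet a a')
  | EPair a b, EPair a' b' => EPair (emeet a a') (emeet b b')
  | EFst a, EFst a' => EFst (emeet a a')
  | ESnd a, ESnd a' => ESnd (emeet a a')
  | EFun f x M, EFun f' x' M' =>
      if Nat.eqb f f' && Nat.eqb x x' then EFun f x (cmeet C M M') else EHole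
  | _, _ => EHole
  end.

Fixpoint vmeet (v w : val) : val :=
  match v, w with
  | VUnit, VUnit => VUnit
  | VInl a, VInl a' => VInl (vmeet a a')
  | VInr a, VInr a' => VInr (vmeet a a')
  | VPair a b, VPair a' b' => VPair (vmeet a a') (vmeet b b')
  | VClos r f x M, VClos r' f' x' M' =>
      if Nat.eqb f f' && Nat.eqb x x'
      then VClos (fun y => vmeet (r y) (r' y)) f x (cmeet C M M')
      else VHole
  | VLoc l, VLoc l' => if Nat.eqb l l' then VLoc l else VHole
  | _, _ => VHole
  end.

Definition envmeet (r r' : env) : env := fun y => vmeet (r y) (r' y).

Inductive eval (r : env) : exp -> val -> Prop :=
| ev_var y : r y <> VHole -> eval r (EVar y) (r y)
| ev_unit : eval r EUnit VUnit
| ev_fun f x M : eval r (EFun f x M) (VClos r f x M)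
| ev_inl e v : eval r e v -> eval r (EInl e) (VInl v)
| ev_inr e v : eval r e v -> eval r (EInr e) (VInr v)
| ev_pair e1 e2 v1 v2 : eval r e1 v1 -> eval r e2 v2 ->
    eval r (EPair e1 e2) (VPair v1 v2)
| ev_fst e v1 v2 : eval r e (VPair v1 v2) -> eval r (EFst e) v1
| ev_snd e v1 v2 : eval r e (VPair v1 v2) -> eval r (ESnd e) v2.

Inductive fwd (r : env) : exp -> val -> Prop :=
| fw_hole : fwd r EHole VHole
| fw_var y : fwd r (EVar y) (r y)
| fw_unit : fwd r EUnit VUnit
| fw_fun f x M : fwd r (EFun f x M) (VClos r f x M)
| fw_inl e v : fwd r e v -> fwd r (EInl e) (VInl v)
| fw_inr e v : fwd r e v -> fwd r (EInr e) (VInr v)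
| fw_pair e1 e2 v1 v2 : fwd r e1 v1 -> fwd r e2 v2 ->
    fwd r (EPair e1 e2) (VPair v1 v2)
| fw_fst e v1 v2 : fwd r e (VPair v1 v2) -> fwd r (EFst e) v1
| fw_snd e v1 v2 : fwd r e (VPair v1 v2) -> fwd r (ESnd e) v2
| fw_fst_hole e : fwd r e VHole -> fwd r (EFst e) VHole
| fw_snd_hole e : fwd r e VHole -> fwd r (ESnd e) VHole.

End Syntax.

Arguments EHole {C}. Arguments VHole {C}. Arguments EUnit {C}. Arguments VUnit {C}.

From Stdlib Require Import Arith.
Set Implicit Arguments.

(* Forward slicing is the graph of a compositional function, and every clause
   of that function commutes with meets: variables because the meet of
   environments is pointwise, constructors because meets are computed
   componentwise, and projections because the meet of two values that are not
   both pairs is a hole.  The common upper bound [e] only ensures that two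
   slices of it which are not holes have the same head constructor. *)

Section ForwardMeet.
Variable C : CompOrder.
Implicit Types (r : env C) (e : exp C) (u w : val C).

Definition vfst u : val C := match u with VPair a _ => a | _ => VHole end.
Definition vsnd u : val C := match u with VPair _ b => b | _ => VHole end.

(* Projecting a value that is neither a pair nor a hole yields [VHole] here,
   whereas [fwd] has no slice for it; [fwd_forward] shows this is harmless. *)
Fixpoint forward r e : val C :=
  match e with
  | EVar _ y => r y
  | EUnit => VUnit
  | EInl a => VInl (forward r a)
  | EInr a => VInr (forward r a)
  | EPair a b => VPair (forward r a) (forward r b)
  | EFst a => vfst (forward r a)
  | ESnd a => vsnd (forward r a)
  | EFun _ f x M => VClos r f x M
  | EHole => VHole
  end.

Lemma fwd_forward r e u : fwd r e u -> u = forward r e.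
Proof.
  induction 1; simpl; subst; try rewrite <- IHfwd; reflexivity.
Qed.

Lemma emeet_hole_r e : emeet e EHole = EHole.
Proof. destruct e; reflexivity. Qed.

Lemma vmeet_hole_r u : vmeet u VHole = VHole.
Proof. destruct u; reflexivity. Qed.

Lemma vfst_vmeet w1 w2 : vfst (vmeet w1 w2) = vmeet (vfst w1) (vfst w2).
Proof.
  destruct w1, w2; simpl; rewrite ?vmeet_hole_r; try reflexivity.
  all: match goal with |- context [if ?b then _ else _] => now destruct b end.
Qed.

Lemma vsnd_vmeet w1 w2 : vsnd (vmeet w1 w2) = vmeet (vsnd w1) (vsnd w2).
Proof.
  destruct w1, w2; simpl; rewrite ?vmeet_hole_r; try reflexivity.
  all: match goal with |- context [if ?b then _ else _] => now destruct b end.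
Qed.

Lemma forward_emeet r1 r2 e a b :
  ele a e -> ele b e ->
  forward (envmeet r1 r2) (emeet a b) = vmeet (forward r1 a) (forward r2 b).
Proof.
  intros le1; revert b; induction le1; intros b le2; [reflexivity|..];
    inversion le2; subst; simpl;
    rewrite ?emeet_hole_r, ?vmeet_hole_r, ?Nat.eqb_refl; try reflexivity.
  - now rewrite IHle1.
  - now rewrite IHle1.
  - now rewrite IHle1_1, IHle1_2.
  - now rewrite IHle1, vfst_vmeet.
  - now rewrite IHle1, vsnd_vmeet.
Qed.

Lemma fwd_emeet r1 r2 e e1 e2 u1 u2 u :
  ele e1 e -> ele e2 e ->
  fwd r1 e1 u1 -> fwd r2 e2 u2 -> fwd (envmeet r1 r2) (emeet e1 e2) u ->
  u = vmeet u1 u2.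
Proof.
  intros le1 le2 F1 F2 F.
  rewrite (fwd_forward F), (fwd_forward F1), (fwd_forward F2).
  exact (forward_emeet r1 r2 le1 le2).
Qed.

End ForwardMeet.

Theorem lemma3p4 (C : CompOrder) (sigma : env C) (e : exp C) (v : val C) :
  wf_env sigma -> hf_env sigma -> hf_exp e ->
  eval sigma e v ->
  forall (r1 r2 : env C) (e1 e2 : exp C) (u1 u2 u : val C),
    envle r1 sigma -> ele e1 e ->
    envle r2 sigma -> ele e2 e ->
    fwd r1 e1 u1 -> fwd r2 e2 u2 ->
    fwd (envmeet r1 r2) (emeet e1 e2) u ->
    u = vmeet u1 u2.
Proof.
  intros _ _ _ _ r1 r2 e1 e2 u1 u2 u _ le1 _ le2.
  exact (fwd_emeet le1 le2).
Qed.
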